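(* Let $V=\{1,\dots,p\}$ and let $F:2^V\to\mathbb{R}$ be submodular, nondecreasing, with $F(\varnothing)=0$ and $F(\{k\})>0$ for all $k\in V$. Let $\Omega(w)=f(|w|)$ where $f$ is the Lovász extension of $F$. For $J\subset V$, let $F_J:2^J\to\mathbb{R}$, $F_J(A)=F(A)$ (restriction), and $F^J:2^{J^c}\to\mathbb{R}$, $F^J(A)=F(A\cup J)-F(J)$ (contraction). Let $\Omega_J(u)=f_J(|u|)$ for $u\in\mathbb{R}^J$ and $\Omega^J(v)=f^J(|v|)$ for $v\in\mathbb{R}^{J^c}$, where $f_J,f^J$ are the Lovász extensions of $F_J,F^J$. Then: (i) for all $w\in\mathbb{R}^p$, $\Omega(w)\geqslant\Omega_J(w_J)+\Omega^J(w_{J^c})$; (ii) for all $w\in\mathbb{R}^p$, if $\min_{j\in J}|w_j|\geqslant\max_{j\in J^c}|w_j|$, then $\Omega(w)=\Omega_J(w_J)+\Omega^J(w_{J^c})$; (iii) $\Omega^J$ is a norm on $\mathbb{R}^{J^c}$ if and only if $J$ is a stable set.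
   Context: The Lovász extension of a set-function $G$ on a finite ground set $W$ is the function on $\mathbb{R}_+^W$ given, for $w$ with components ordered $w_{j_1}\geqslant\cdots\geqslant w_{j_m}\geqslant0$, by $\sum_{k=1}^m w_{j_k}[G(\{j_1,\dots,j_k\})-G(\{j_1,\dots,j_{k-1}\})]$. $|w|$ is the componentwise absolute value; $w_J$ is the subvector indexed by $J$; $J^c=V\setminus J$. A set $J\subset V$ is stable if every strict superset $B\supsetneq J$ satisfies $F(B)>F(J)$. *)

From HB Require Import structures.
From mathcomp Require Import all_boot all_order all_algebra.
Set Implicit Arguments. Unset Strict Implicit. Unset Printing Implicit Defensive.
Import Order.TTheory GRing.Theory Num.Theory.
Local Open Scope ring_scope.

Section Defs.
Variable R : realFieldType.

(* The components are ordered decreasingly: s = [:: j_1; ...; j_m] with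
   w j_1 >= ... >= w j_m (stable sort of enum W, so ties are broken by
   enumeration order), and
   f(w) = sum_k w_{j_k} (G {j_1..j_k} - G {j_1..j_{k-1}}). *)
Definition lovasz (W : finType) (G : {set W} -> R) (w : W -> R) : R :=
  let s := sort (fun x y => w y <= w x) (enum W) in
  \sum_(i <- s) w i * (G [set x in take (index i s).+1 s]
                       - G [set x in take (index i s) s]).

Definition submodular (T : finType) (F : {set T} -> R) : Prop :=
  forall A B : {set T}, F (A :|: B) + F (A :&: B) <= F A + F B.

Definition nondecreasing_set (T : finType) (F : {set T} -> R) : Prop :=
  forall A B : {set T}, A \subset B -> F A <= F B.

Definition stable (T : finType) (F : {set T} -> R) (J : {set T}) : Prop :=
  forall B : {set T}, J \proper B -> F J < F B.

Definition restr (T : finType) (F : {set T} -> R) (J : {set T})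
  : {set {x : T | x \in J}} -> R :=
  fun A => F [set val x | x in A].

Definition contr (T : finType) (F : {set T} -> R) (J : {set T})
  : {set {x : T | x \in ~: J}} -> R :=
  fun A => F ([set val x | x in A] :|: J) - F J.

Definition subvec (T : finType) (w : T -> R) (J : {set T})
  : {x : T | x \in J} -> R := fun x => w (val x).

Definition is_norm (I : finType) (N : (I -> R) -> R) : Prop :=
  [/\ forall x, 0 <= N x,
      forall x, N x = 0 -> x = (fun _ => 0),
      forall (a : R) x, N (fun i => a * x i) = `|a| * N x
    & forall x y, N (fun i => x i + y i) <= N x + N y].

End Defs.

Arguments restr {R T} F J _.
Arguments contr {R T} F J _.
Arguments subvec {R T} w J _.

From HB Require Import structures.
From mathcomp Require Import all_boot all_order all_algebra.
From mathcomp Require Import ring lra.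
From Stdlib Require Import FunctionalExtensionality.
Import Order.TTheory GRing.Theory Num.Theory.
Local Open Scope ring_scope.

Set Implicit Arguments. Unset Strict Implicit. Unset Printing Implicit Defensive.

(* For w >= 0 the Lovász extension of a submodular G with G(∅) = 0 is the
   maximum of <u, w> over the submodular polyhedron {u | u(A) <= G(A)},
   attained at the vector of marginal gains along a decreasing ordering of w
   (Edmonds' greedy algorithm).  The chain sum along the ordering listing J
   first (each block decreasingly) is exactly Ω_J(w_J) + Ω^J(w_{J^c}); its
   marginal vector lies in the polyhedron, which gives (i), and the ordering is
   itself decreasing when |w| is larger on J, which gives (ii).  The max
   formula also makes the Lovász extension of a nondecreasing submodular G a
   norm exactly when G is positive on singletons, and F^J({k}) > 0 for all
   k outside J is stability of J, which gives (iii). *)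

Section ChainSums.
Variables (R : realFieldType) (W : finType).
Implicit Types (G : {set W} -> R) (u w : W -> R) (s : seq W).

Definition marginal G s i :=
  G [set x in take (index i s).+1 s] - G [set x in take (index i s) s].

Definition chain_sum G w s := \sum_(i <- s) w i * marginal G s i.

Lemma marginal_rcons G s x i : i \in s -> marginal G (rcons s x) i = marginal G s i.
Proof.
move=> iS; have hi : (index i s < size s)%N by rewrite index_mem.
by rewrite /marginal -cats1 index_cat iS !takel_cat // ltnW.
Qed.

Lemma marginal_last G s x : x \notin s ->
  marginal G (rcons s x) x = G [set y in rcons s x] - G [set y in s].
Proof.
move=> xs; rewrite /marginal -cats1 index_cat (negbTE xs) /= eqxx addn0.
by rewrite take_oversize ?size_cat ?addn1 // takel_cat // take_size.
Qed.

Lemma marginal_ge0 G s i : nondecreasing_set G -> 0 <= marginal G s i.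
Proof.
move=> Gm; rewrite subr_ge0; apply: Gm; apply/subsetP => y; rewrite !inE.
by rewrite -(take_takel s (leqnSn (index i s))); apply: mem_take.
Qed.

Lemma chain_sum_rcons G w s x : x \notin s ->
  chain_sum G w (rcons s x) =
  chain_sum G w s + w x * (G [set y in rcons s x] - G [set y in s]).
Proof.
move=> xs; rewrite /chain_sum big_rcons /= marginal_last //; congr (_ + _).
by apply: eq_big_seq => i iS; rewrite marginal_rcons.
Qed.

Lemma chain_sum_nil G w : chain_sum G w [::] = 0.
Proof. by rewrite /chain_sum big_nil. Qed.

Lemma set_mem_nil : [set y in [::]] = set0 :> {set W}.
Proof. by apply/setP => y; rewrite !inE. Qed.

Lemma chain_sum_shift G w s c : G set0 = 0 -> uniq s ->
  chain_sum G (fun i => w i - c) s = chain_sum G w s - c * G [set y in s].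
Proof.
move=> G0; elim/last_ind: s => [|s x IH].
  by rewrite !chain_sum_nil set_mem_nil G0 mulr0 subr0.
by rewrite rcons_uniq => /andP[xs us]; rewrite !chain_sum_rcons // IH //; ring.
Qed.

Definition in_submodular_polyhedron G u :=
  forall A : {set W}, \sum_(i in A) u i <= G A.

(* Abel summation: lowering all weights by the last (smallest) one reduces to a
   shorter chain, and the remaining term is controlled by the constraint on the
   whole chain. *)
Lemma dot_le_chain_sum G w u s : G set0 = 0 -> uniq s ->
  pairwise (fun x y => w y <= w x) s -> (forall i, i \in s -> 0 <= w i) ->
  in_submodular_polyhedron G u ->
  \sum_(i <- s) u i * w i <= chain_sum G w s.
Proof.
move=> G0 + + + uP; elim/last_ind: s w => [|s x IH] w.
  by rewrite big_nil chain_sum_nil.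
rewrite rcons_uniq => /andP[xs us].
rewrite -cats1 pairwise_cat => /and3P[/allrelP hall hs _] hw.
set c := w x.
have c_ge0 : 0 <= c by apply: hw; rewrite mem_cat mem_head orbT.
have IHc : \sum_(i <- s) u i * (w i - c) <= chain_sum G w s - c * G [set y in s].
  rewrite -chain_sum_shift //; apply: IH => //.
    by apply: sub_pairwise hs => a b /=; rewrite lerD2r.
  by move=> i iS; rewrite subr_ge0 hall ?mem_head.
have split_c : \sum_(i <- s) u i * w i =
    \sum_(i <- s) u i * (w i - c) + c * \sum_(i <- s) u i.
  by rewrite mulr_sumr -big_split /=; apply: eq_bigr => i _; ring.
have sum_chain : \sum_(i <- s) u i + u x = \sum_(i in [set y in rcons s x]) u i.
  rewrite -big_rcons /= big_uniq ?rcons_uniq ?xs ?us //.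
  by apply: eq_bigl => i; rewrite inE.
have := ler_wpM2l c_ge0 (uP [set y in rcons s x]); rewrite -sum_chain mulrDr.
rewrite cats1 chain_sum_rcons // big_rcons /= split_c -/c.
lra.
Qed.

Lemma sum_marginal_le G s : submodular G -> G set0 = 0 -> uniq s ->
  forall A : {set W}, A \subset [set y in s] ->
  \sum_(i in A) marginal G s i <= G A.
Proof.
move=> Gs G0; elim/last_ind: s => [|s x IH].
  by move=> _ A; rewrite set_mem_nil subset0 => /eqP ->; rewrite big_set0 G0.
rewrite rcons_uniq => /andP[xs us] A sAs.
have inS i : i \in A -> i != x -> i \in s.
  by move=> iA ix; have := subsetP sAs i iA; rewrite inE mem_rcons in_cons (negbTE ix).
have {}IH (B : {set W}) : B \subset A -> x \notin B -> \sum_(i in B) marginal G s i <= G B.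
  move=> sBA xB; apply: IH => //; apply/subsetP => i iB; rewrite inE.
  by apply: inS; [apply: (subsetP sBA) | apply: contraNneq xB => <-].
have marginal_A i : i \in A -> i != x ->
    marginal G (rcons s x) i = marginal G s i.
  by move=> iA ix; rewrite marginal_rcons ?inS.
have [xA|xNA] := boolP (x \in A); last first.
  rewrite (eq_bigr (marginal G s)); first exact: IH.
  by move=> i iA; rewrite marginal_A //; apply: contraNneq xNA => <-.
rewrite (bigD1 x) //= marginal_last //.
rewrite (eq_bigl (mem (A :\ x))); last by move=> i; rewrite !inE andbC.
rewrite (eq_bigr (marginal G s)); last first.
  by move=> i; rewrite !inE => /andP[ix iA]; rewrite marginal_A.
have := IH (A :\ x) (subD1set A x) (negbT (setD11 x A)).
have := Gs A [set y in s].
have -> : A :|: [set y in s] = [set y in rcons s x].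
  apply/setP => i; rewrite !inE mem_rcons in_cons.
  have [->|ix] := eqVneq i x; first by rewrite xA.
  by case: (boolP (i \in A)) => // iA; rewrite inS.
have -> : A :&: [set y in s] = A :\ x.
  apply/setP => i; rewrite !inE.
  have [->|ix] := eqVneq i x; first by rewrite (negbTE xs) andbF.
  by case: (boolP (i \in A)) => // iA; rewrite inS.
lra.
Qed.

Lemma marginal_in_polyhedron G s : submodular G -> G set0 = 0 ->
  perm_eq s (enum W) -> in_submodular_polyhedron G (marginal G s).
Proof.
move=> Gs G0 sW A; apply: sum_marginal_le => //; first by rewrite (perm_uniq sW) enum_uniq.
by apply/subsetP => y _; rewrite inE (perm_mem sW) mem_enum.
Qed.

Lemma chain_sum_cat G w s r : uniq (s ++ r) ->
  chain_sum G w (s ++ r) =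
  chain_sum G w s + chain_sum (fun B => G ([set y in s] :|: B) - G [set y in s]) w r.
Proof.
elim/last_ind: r => [|r x IH]; first by rewrite cats0 chain_sum_nil addr0.
rewrite -rcons_cat rcons_uniq => /andP[xs us].
have xr : x \notin r by apply: contra xs; rewrite mem_cat orbC => ->.
rewrite !chain_sum_rcons // IH //.
have -> : [set y in s] :|: [set y in rcons r x] = [set y in rcons (s ++ r) x].
  by apply/setP => y; rewrite !inE !mem_rcons !in_cons mem_cat orbCA.
have -> : [set y in s] :|: [set y in r] = [set y in s ++ r].
  by apply/setP => y; rewrite !inE mem_cat.
ring.
Qed.

Lemma eq_chain_sum G1 G2 w s : G1 =1 G2 -> chain_sum G1 w s = chain_sum G2 w s.
Proof. by move=> eG; apply: eq_bigr => i _; rewrite /marginal !eG. Qed.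

End ChainSums.

Lemma chain_sum_map (R : realFieldType) (W W' : finType) (f : W' -> W)
    (G : {set W} -> R) (w : W -> R) (s : seq W') :
  injective f -> uniq s ->
  chain_sum G w (map f s) = chain_sum (fun B => G (f @: B)) (fun i => w (f i)) s.
Proof.
move=> finj; elim/last_ind: s => [|s x IH]; first by rewrite !chain_sum_nil.
rewrite rcons_uniq => /andP[xs us].
rewrite map_rcons !chain_sum_rcons ?(mem_map finj) // IH //.
have map_set t : [set y in map f t] = f @: [set y in t].
  apply/setP => y; rewrite inE; apply/idP/imsetP.
    by case/mapP => z zt ->; exists z; rewrite ?inE.
  by case=> z; rewrite inE => zt ->; apply: map_f.
by rewrite -map_rcons !map_set.
Qed.

Section Lovasz.
Variables (R : realFieldType) (W : finType).
Implicit Types (G : {set W} -> R) (u w : W -> R) (s : seq W).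

Definition decr_enum w := sort (fun x y : W => w y <= w x) (enum W).

Lemma lovasz_chain_sum_decr G w : lovasz G w = chain_sum G w (decr_enum w).
Proof. by []. Qed.

Lemma decr_enum_perm w : perm_eq (decr_enum w) (enum W).
Proof. by rewrite perm_sort. Qed.

Lemma decr_enum_uniq w : uniq (decr_enum w).
Proof. by rewrite sort_uniq enum_uniq. Qed.

Lemma decr_enum_pairwise w : pairwise (fun x y => w y <= w x) (decr_enum w).
Proof.
rewrite -sorted_pairwise; last by move=> a b c /= h1 h2; apply: le_trans h1.
by apply: sort_sorted => a b /=; apply: le_total.
Qed.

Lemma sum_perm_enum s (f : W -> R) : perm_eq s (enum W) ->
  \sum_(i <- s) f i = \sum_i f i.
Proof. by move=> sW; rewrite (perm_big _ sW) big_enum. Qed.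

Definition greedy G w := marginal G (decr_enum w).

Lemma greedy_in_polyhedron G w : submodular G -> G set0 = 0 ->
  in_submodular_polyhedron G (greedy G w).
Proof. by move=> Gs G0; apply: marginal_in_polyhedron => //; apply: decr_enum_perm. Qed.

Lemma lovaszE G w : lovasz G w = \sum_i greedy G w i * w i.
Proof.
rewrite lovasz_chain_sum_decr /chain_sum (sum_perm_enum _ (decr_enum_perm w)).
by apply: eq_bigr => i _; rewrite mulrC.
Qed.

Lemma dot_le_lovasz G w u : G set0 = 0 -> (forall i, 0 <= w i) ->
  in_submodular_polyhedron G u -> \sum_i u i * w i <= lovasz G w.
Proof.
move=> G0 w_ge0 uP; rewrite -(sum_perm_enum _ (decr_enum_perm w)).
by apply: dot_le_chain_sum => //; [apply: decr_enum_uniq | apply: decr_enum_pairwise].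
Qed.

Lemma chain_sum_le_lovasz G w s : submodular G -> G set0 = 0 ->
  (forall i, 0 <= w i) -> perm_eq s (enum W) -> chain_sum G w s <= lovasz G w.
Proof.
move=> Gs G0 w_ge0 sW; rewrite /chain_sum (sum_perm_enum _ sW).
under eq_bigr do rewrite mulrC.
by apply: dot_le_lovasz => //; apply: marginal_in_polyhedron.
Qed.

Lemma lovasz_chain_sum G w s : submodular G -> G set0 = 0 ->
  (forall i, 0 <= w i) -> perm_eq s (enum W) ->
  pairwise (fun x y => w y <= w x) s -> lovasz G w = chain_sum G w s.
Proof.
move=> Gs G0 w_ge0 sW s_decr; apply/le_anti; rewrite chain_sum_le_lovasz //.
rewrite lovaszE -(sum_perm_enum _ sW) andbT.
apply: dot_le_chain_sum => //; first by rewrite (perm_uniq sW) enum_uniq.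
exact: greedy_in_polyhedron.
Qed.

Lemma lovasz_ge0 G w : nondecreasing_set G -> (forall i, 0 <= w i) -> 0 <= lovasz G w.
Proof.
by move=> Gm w_ge0; rewrite lovaszE sumr_ge0 // => i _; rewrite mulr_ge0 ?marginal_ge0.
Qed.

Lemma lovasz_subadditive G (x y : W -> R) : submodular G -> G set0 = 0 ->
  (forall i, 0 <= x i) -> (forall i, 0 <= y i) ->
  lovasz G (fun i => x i + y i) <= lovasz G x + lovasz G y.
Proof.
move=> Gs G0 x_ge0 y_ge0; rewrite lovaszE.
under eq_bigr do rewrite mulrDr; rewrite big_split /=.
by apply: lerD; apply: dot_le_lovasz => //; apply: greedy_in_polyhedron.
Qed.

Lemma le_lovasz G (x y : W -> R) : submodular G -> G set0 = 0 -> nondecreasing_set G ->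
  (forall i, 0 <= x i) -> (forall i, x i <= y i) -> lovasz G x <= lovasz G y.
Proof.
move=> Gs G0 Gm x_ge0 xy; rewrite {1}lovaszE.
apply: le_trans (_ : \sum_i greedy G x i * y i <= _).
  by apply: ler_sum => i _; rewrite ler_wpM2l ?marginal_ge0.
apply: dot_le_lovasz => //; last exact: greedy_in_polyhedron.
by move=> i; apply: le_trans (x_ge0 i) (xy i).
Qed.

Lemma lovaszZ G (x : W -> R) c : submodular G -> G set0 = 0 ->
  (forall i, 0 <= x i) -> 0 <= c -> lovasz G (fun i => c * x i) = c * lovasz G x.
Proof.
move=> Gs G0 x_ge0 c_ge0; have cx_ge0 i : 0 <= c * x i by rewrite mulr_ge0.
apply/le_anti/andP; split.
  rewrite lovaszE; under eq_bigr do rewrite mulrCA; rewrite -mulr_sumr.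
  by rewrite ler_wpM2l // dot_le_lovasz //; apply: greedy_in_polyhedron.
rewrite lovaszE mulr_sumr; under eq_bigr do rewrite mulrCA.
by apply: dot_le_lovasz => //; apply: greedy_in_polyhedron.
Qed.

Lemma lovasz_ge_singleton G w i0 : nondecreasing_set G -> G set0 = 0 ->
  (forall i, 0 <= w i) -> G [set i0] * w i0 <= lovasz G w.
Proof.
move=> Gm G0 w_ge0; pose u i := if i == i0 then G [set i0] else 0.
have uP : in_submodular_polyhedron G u.
  move=> A; rewrite /u -big_mkcondr /=.
  have [i0A|i0NA] := boolP (i0 \in A).
    rewrite (eq_bigl (pred1 i0)) ?big_pred1_eq ?Gm ?sub1set //.
    by move=> i /=; have [->|] := eqVneq i i0; rewrite ?i0A ?andbF.
  rewrite big_pred0 -?G0 ?Gm ?sub0set //.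
  by move=> i; have [->|] := eqVneq i i0; rewrite ?(negbTE i0NA) ?andbF.
apply: le_trans (dot_le_lovasz G0 w_ge0 uP).
rewrite (bigD1 i0) //= big1 ?addr0 /u ?eqxx // => i /negbTE ->.
by rewrite mul0r.
Qed.

Lemma lovasz_indicator_le G (C : {set W}) : submodular G -> G set0 = 0 ->
  lovasz G (fun i => if i \in C then 1 else 0) <= G C.
Proof.
move=> Gs G0; rewrite lovaszE.
under eq_bigr do rewrite (fun_if (fun t => _ * t)) mulr1 mulr0.
by rewrite -big_mkcond /=; apply: greedy_in_polyhedron.
Qed.

Lemma is_norm_lovasz G : submodular G -> nondecreasing_set G -> G set0 = 0 ->
  is_norm (fun v : W -> R => lovasz G (fun i => `|v i|)) <->
  (forall i, 0 < G [set i]).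
Proof.
move=> Gs Gm G0; have abs_ge0 (v : W -> R) i : 0 <= `|v i| by [].
split=> [[_ norm_eq0 _ _] i|G1_gt0].
  rewrite ltNge; apply/negP => G1_le0.
  pose v j : R := if j \in [set i] then 1 else 0.
  have vi : v i = 1 by rewrite /v set11.
  suff /norm_eq0 /(congr1 (fun f => f i)) /eqP : lovasz G (fun j => `|v j|) = 0.
    by rewrite vi oner_eq0.
  have -> : (fun j => `|v j|) = v.
    by apply: functional_extensionality => j; rewrite /v; case: ifP; rewrite ?normr1 ?normr0.
  apply/le_anti; rewrite lovasz_ge0 ?andbT // => [|j]; last by rewrite /v; case: ifP.
  exact: le_trans (lovasz_indicator_le _ Gs G0) G1_le0.
split=> [v|v v0|a v|v1 v2]; first exact: lovasz_ge0.
- apply: functional_extensionality => i; apply/eqP; apply: contraT => vi_neq0.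
  have := lovasz_ge_singleton i Gm G0 (abs_ge0 v); rewrite v0.
  have : 0 < G [set i] * `|v i| by rewrite mulr_gt0 ?normr_gt0.
  lra.
- have -> : (fun i => `|a * v i|) = (fun i => `|a| * `|v i|).
    by apply: functional_extensionality => i; rewrite normrM.
  exact: lovaszZ.
- apply: le_trans (lovasz_subadditive Gs G0 (abs_ge0 v1) (abs_ge0 v2)).
  by apply: le_lovasz => // i; apply: ler_normD.
Qed.

End Lovasz.

Section Splitting.
Variables (R : realFieldType) (W : finType) (F : {set W} -> R) (J : {set W}).

Lemma contr_submodular : submodular F -> submodular (contr F J).
Proof.
move=> Fsub A B; rewrite /contr imsetU imsetI; last by move=> a b _ _; apply: val_inj.
have := Fsub ([set val x | x in A] :|: J) ([set val x | x in B] :|: J).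
by rewrite setUACA setUid -setUIl; lra.
Qed.

Lemma contr_nondecreasing : nondecreasing_set F -> nondecreasing_set (contr F J).
Proof. by move=> Fmon A B sAB; rewrite /contr lerD2r Fmon ?setSU ?imsetS. Qed.

Lemma contr0 : contr F J set0 = 0.
Proof. by rewrite /contr imset0 set0U subrr. Qed.

Lemma stableP : nondecreasing_set F ->
  stable F J <-> (forall k, k \notin J -> F J < F (k |: J)).
Proof.
move=> Fmon; split=> [Jst k kNJ|J_lt B /properP[sJB [k kB kNJ]]].
  by apply: Jst; rewrite properUr ?sub1set.
by apply: lt_le_trans (J_lt k kNJ) _; rewrite Fmon // subUset sub1set kB.
Qed.

Lemma contr_singleton_pos : nondecreasing_set F ->
  (forall i : {x | x \in ~: J}, 0 < contr F J [set i]) <-> stable F J.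
Proof.
move=> Fmon; rewrite stableP //.
have contr1 i : contr F J [set i] = F (val i |: J) - F J by rewrite /contr imset_set1.
split=> [pos k kNJ|J_lt i].
  have kJc : k \in ~: J by rewrite inE.
  by have := pos (exist _ k kJc); rewrite contr1 subr_gt0.
by rewrite contr1 subr_gt0 J_lt // -in_setC (valP i).
Qed.

Definition split_order (w : W -> R) : seq W :=
  map val (decr_enum (subvec w J)) ++ map val (decr_enum (subvec w (~: J))).

Lemma mem_map_val_decr_enum (A : {set W}) (v : {x | x \in A} -> R) y :
  (y \in map val (decr_enum v)) = (y \in A).
Proof.
apply/mapP/idP => [[a _ ->]|yA]; first exact: valP.
by exists (exist _ y yA); rewrite // (perm_mem (decr_enum_perm v)) mem_enum.
Qed.

Lemma split_order_perm w : perm_eq (split_order w) (enum W).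
Proof.
apply: uniq_perm; last by move=> y; rewrite mem_cat !mem_map_val_decr_enum inE orbN mem_enum.
  rewrite cat_uniq !(map_inj_uniq val_inj) !decr_enum_uniq /= andbT.
  by apply/hasPn => y; rewrite !mem_map_val_decr_enum inE.
exact: enum_uniq.
Qed.

Lemma chain_sum_split_order w :
  chain_sum F w (split_order w) =
  lovasz (restr F J) (subvec w J) + lovasz (contr F J) (subvec w (~: J)).
Proof.
have uniq_split := perm_uniq (split_order_perm w); rewrite enum_uniq in uniq_split.
rewrite chain_sum_cat // !chain_sum_map ?decr_enum_uniq //; try exact: val_inj.
have -> : [set y in map val (decr_enum (subvec w J))] = J.
  by apply/setP => y; rewrite inE mem_map_val_decr_enum.
by congr (_ + _); apply: eq_chain_sum => B; rewrite /contr setUC.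
Qed.

Lemma split_order_pairwise w :
  (forall j k, j \in J -> k \in ~: J -> w k <= w j) ->
  pairwise (fun x y => w y <= w x) (split_order w).
Proof.
move=> J_ge_Jc; rewrite pairwise_cat !pairwise_map.
apply/and3P; split; [|exact: decr_enum_pairwise|exact: decr_enum_pairwise].
by apply/allrelP => x y; rewrite !mem_map_val_decr_enum; apply: J_ge_Jc.
Qed.

End Splitting.

Theorem proposition4 (R : realFieldType) (p : nat) (F : {set 'I_p} -> R)
  (Fsub : submodular F) (Fmon : nondecreasing_set F) (F0 : F set0 = 0)
  (Fpos : forall k : 'I_p, 0 < F [set k]) (J : {set 'I_p}) :
  let Omega := fun w : 'I_p -> R => lovasz F (fun i => `|w i|) in
  let Omega_J := fun u : {x : 'I_p | x \in J} -> R =>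
                   @lovasz R _ (restr F J) (fun i => `|u i|) in
  let Omega_upJ := fun v : {x : 'I_p | x \in ~: J} -> R =>
                   @lovasz R _ (contr F J) (fun i => `|v i|) in
  [/\ (forall w : 'I_p -> R,
         Omega_J (subvec w J) + Omega_upJ (subvec w (~: J)) <= Omega w),
      (forall w : 'I_p -> R,
         (forall j k : 'I_p, j \in J -> k \in ~: J -> `|w k| <= `|w j|) ->
         Omega w = Omega_J (subvec w J) + Omega_upJ (subvec w (~: J)))
    & (is_norm Omega_upJ <-> stable F J)].
Proof.
move=> Omega Omega_J Omega_upJ.
have abs_ge0 (w : 'I_p -> R) i : 0 <= `|w i| by [].
split=> [w|w J_ge_Jc|].
- have := chain_sum_le_lovasz Fsub F0 (abs_ge0 w) (split_order_perm J (fun i => `|w i|)).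
  by rewrite chain_sum_split_order.
- have := lovasz_chain_sum Fsub F0 (abs_ge0 w) (split_order_perm J (fun i => `|w i|))
    (split_order_pairwise J_ge_Jc).
  by rewrite chain_sum_split_order.
- rewrite -contr_singleton_pos //; apply: is_norm_lovasz.
  + exact: contr_submodular.
  + exact: contr_nondecreasing.
  + exact: contr0.
Qed.
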